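(* For every $\Delta\ge 2$, $\mathrm{LP}[\mathsf{GRAPH}_\Delta]\subsetneq\mathrm{NLP}[\mathsf{GRAPH}_\Delta]$; in particular $\mathrm{LP}\subsetneq\mathrm{NLP}$.
   Context: Graphs. All graphs are finite, nonempty, simple, undirected and connected, and labeled: a graph is a triple $G=(V(G),E(G),\lambda_G)$ with labeling $\lambda_G:V(G)\to\{0,1\}^*$. $\mathsf{GRAPH}$ is the set of all graphs. A graph property is a subset of $\mathsf{GRAPH}$ closed under label-preserving isomorphism. For a class $\mathcal C$ of properties and a set $B$ of graphs, $\mathcal C[B]=\{P\cap B : P\in\mathcal C\}$. $N^G_r(u)$ denotes the subgraph of $G$ induced by the nodes at distance at most $r$ from $u$ (with inherited labels). The structural degree of a node $u$ is $\deg(u)+|\lambda_G(u)|$; $\mathsf{GRAPH}_\Delta$ is the set of graphs all of whose nodes have structural degree at most $\Delta$. Identifiers and certificates. An identifier assignment of $G$ is a map $\mathrm{id}:V(G)\to\{0,1\}^*$; it is $r$-locally unique if $\mathrm{id}(u)\neq\mathrm{id}(v)$ for all distinct nodes $u,v$ at distance at most $2r$. Identifiers are ordered lexicographically (a proper prefix is smaller). A certificate assignment is a map $\kappa:V(G)\to\{0,1\}^*$; for $r\in\mathbb N$ and $p:\mathbb N\to\mathbb N$ it is $(r,p)$-bounded (w.r.t. $(G,\mathrm{id})$) if $|\kappa(u)|\le p\big(\sum_{v\in N^G_r(u)}(1+|\lambda_G(v)|+|\mathrm{id}(v)|)\big)$ for every node $u$. Distributed Turing machines. Such a machine $M$ is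 a Turing machine with three one-way-infinite tapes (receiving, internal, sending) over the alphabet $\{\vdash,\square,\#,0,1\}$ (left-end marker, blank, separator, bits), with designated states start, pause, stop. It is executed on a graph $G$ under an (at least $1$-locally unique) identifier assignment $\mathrm{id}$ and a certificate assignment $\kappa$: every node runs its own copy of $M$ in synchronous rounds. In each round, a node $u$ whose neighbors are $v_1,\dots,v_d$ in increasing identifier order (i) gets $m_1\#\cdots\#m_d\#$ on its receiving tape, where $m_i$ is the message sent to it by $v_i$ in the previous round (empty in the first round); (ii) its sending tape is emptied, its internal tape is initialized to $\lambda_G(u)\#\mathrm{id}(u)\#\kappa(u)$ in the first round and otherwise keeps its content, and, unless $u$ reached stop in an earlier round, $M$ runs from state start with all heads leftmost until it enters pause or stop; (iii) $u$ sends to $v_i$ the $i$-th $\#$-separated bit string on its sending tape (the empty string if there is none). The execution terminates once all nodes are in stop. The result $M(G,\mathrm{id},\kappa)$ is $G$ relabeled so that each node gets the bit string on its internal tape (other symbols ignored); $G$ is accepted, written $M(G,\mathrm{id},\kappa)\equiv\mathrm{accept}$, if every node's resulting label is the string $1$. A local-polynomial machine is a distributed Turing machine for which there are a constant $c$ and a polynomial $q$ such that, on every graph and under all identifier and certificate assignments, all nodes reach stop within $c$ rounds, and in every round every node makes at most $q(n)$ computation steps, $n$ being the total length of its receiving- and internal-tape contents at the beginning of the round. Classes. $\mathrm{LP}$ is the class of graph properties $P$ for which there are a local-polynomial machine $M$ and a constant $r_{\mathrm{id}}\ge1$ such that for every graph $G$ and every $r_{\mathrm{id}}$-locally unique identifier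 assignment $\mathrm{id}$, $M$ accepts $G$ under $\mathrm{id}$ (with empty certificates) iff $G\in P$. $\mathrm{NLP}$ is the class of graph properties $P$ for which there exist a local-polynomial machine $M$, constants $r_{\mathrm{id}},r\ge 1$ and a polynomial $p$ such that for every graph $G$ and every $r_{\mathrm{id}}$-locally unique identifier assignment $\mathrm{id}$ of $G$: $G\in P\iff\exists\kappa\,:\,M(G,\mathrm{id},\kappa)\equiv\mathrm{accept}$, $\kappa$ ranging over $(r,p)$-bounded certificate assignments of $(G,\mathrm{id})$. *)

From HB Require Import structures.
From mathcomp Require Import all_boot.

Set Implicit Arguments.
Unset Strict Implicit.
Unset Printing Implicit Defensive.

Definition bits := seq bool.

Record graph := Graph {
  gsize : nat;
  gadj : rel 'I_gsize;
  glab : 'I_gsize -> bits;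
  gsize_pos : 0 < gsize;
  gadj_sym : forall u v, gadj u v = gadj v u;
  gadj_irr : forall u, ~~ gadj u u;
  gconn : forall u v, connect gadj u v
}.

Definition vertex (G : graph) := 'I_(gsize G).

Definition graph_iso (G H : graph) : Prop :=
  exists f : vertex G -> vertex H,
    bijective f /\
    (forall u v, gadj (f u) (f v) = gadj u v) /\
    (forall u, glab (f u) = glab u).

Definition is_property (P : graph -> Prop) : Prop :=
  forall G H, graph_iso G H -> P G -> P H.

(* ball G k u v  <=>  dist_G(u, v) <= k *)
Fixpoint ball (G : graph) (k : nat) (u v : vertex G) : bool :=
  match k with
  | 0 => u == v
  | k'.+1 => ball k' u v || [exists w : vertex G, ball k' u w && gadj w v]
  end.

Definition degree (G : graph) (u : vertex G) : nat :=
  #|[pred v : vertex G | gadj u v]|.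

Definition graph_Delta (Delta : nat) (G : graph) : Prop :=
  forall u : vertex G, degree u + size (glab u) <= Delta.

Definition locally_unique (G : graph) (r : nat) (id : vertex G -> bits) : Prop :=
  forall u v : vertex G, u != v -> ball (2 * r) u v -> id u != id v.

(* polynomial with natural coefficients cs = [:: a0; a1; ...] *)
Definition npoly (cs : seq nat) (n : nat) : nat :=
  foldr (fun c acc => c + n * acc) 0 cs.

Definition cert_bounded (G : graph) (id : vertex G -> bits) (r : nat)
    (p : seq nat) (kappa : vertex G -> bits) : Prop :=
  forall u : vertex G,
    size (kappa u) <=
    npoly p (\sum_(v : vertex G | ball r u v) (1 + size (glab v) + size (id v))).

(* lexicographic order on bit strings, proper prefix smaller, 0 < 1 *)
Fixpoint lexle (s t : bits) : bool :=
  match s, t with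
  | [::], _ => true
  | _ :: _, [::] => false
  | b :: s', c :: t' => if b == c then lexle s' t' else ~~ b
  end.

Definition nbrs (G : graph) (id : vertex G -> bits) (u : vertex G) : seq (vertex G) :=
  sort (fun v w => lexle (id v) (id w)) [seq v <- enum 'I_(gsize G) | gadj u v].

Inductive sym := SLend | SBlank | SSep | S0 | S1.
Inductive move := MoveL | MoveS | MoveR.

Record dtm := DTM {
  state : finType;
  q_start : state;
  q_pause : state;
  q_stop : state;
  q_start_pause : q_start != q_pause;
  q_start_stop : q_start != q_stop;
  q_pause_stop : q_pause != q_stop;
  (* reads (receiving, internal, sending), writes, moves *)
  delta : state -> sym * sym * sym -> state * (sym * sym * sym) * (move * move * move)
}.

(* A one-way-infinite tape: cell 0 holds the left-end marker, the list
   gives cells 1, 2, ...; all further cells are blank. *)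
Definition tape := seq sym.

Definition tread (t : tape) (h : nat) : sym :=
  if h is h'.+1 then nth SBlank t h' else SLend.
Definition twrite (t : tape) (h : nat) (s : sym) : tape :=
  if h is h'.+1 then set_nth SBlank t h' s else t.
Definition tmove (h : nat) (m : move) : nat :=
  match m with MoveL => h.-1 | MoveS => h | MoveR => h.+1 end.

Record cfg (Q : Type) := Cfg {
  cst : Q;
  trecv : tape; tint : tape; tsend : tape;
  hrecv : nat; hint : nat; hsend : nat
}.

Definition halted (M : dtm) (C : cfg (state M)) : bool :=
  (cst C == q_pause M) || (cst C == q_stop M).

Definition tm_step (M : dtm) (C : cfg (state M)) : cfg (state M) :=
  let: (q', (w1, w2, w3), (m1, m2, m3)) :=
    delta (cst C) (tread (trecv C) (hrecv C), tread (tint C) (hint C),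
                   tread (tsend C) (hsend C)) in
  Cfg q' (twrite (trecv C) (hrecv C) w1) (twrite (tint C) (hint C) w2)
         (twrite (tsend C) (hsend C) w3)
         (tmove (hrecv C) m1) (tmove (hint C) m2) (tmove (hsend C) m3).

Fixpoint run_until (M : dtm) (fuel : nat) (C : cfg (state M)) : cfg (state M) :=
  match fuel with
  | 0 => C
  | k.+1 => if halted C then C else run_until k (tm_step C)
  end.

Definition sym_of_bit (b : bool) : sym := if b then S1 else S0.
Definition enc (s : bits) : tape := map sym_of_bit s.
Definition bits_of (t : tape) : bits :=
  pmap (fun s => match s with S0 => Some false | S1 => Some true | _ => None end) t.

(* length of the content of a tape: position of the last non-blank cell *)
Definition is_blank (s : sym) : bool := if s is SBlank then true else false.
Fixpoint drop_blanks (t : tape) : tape :=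
  if t is s :: t' then (if is_blank s then drop_blanks t' else t) else [::].
Definition clen (t : tape) : nat := size (drop_blanks (rev t)).

Fixpoint split_sep (t : tape) : seq tape :=
  match t with
  | [::] => [:: [::]]
  | SSep :: t' => [::] :: split_sep t'
  | s :: t' => match split_sep t' with
               | x :: xs => (s :: x) :: xs
               | [::] => [:: [:: s]]
               end
  end.

(* the i-th (0-based) #-separated bit string on a sending tape *)
Definition msg (t : tape) (i : nat) : bits := bits_of (nth [::] (split_sep t) i).

Record nstate := NS { ns_int : tape; ns_send : tape; ns_stop : bool }.

Definition init_int (l i k : bits) : tape :=
  enc l ++ SSep :: enc i ++ SSep :: enc k.

Definition node_round (M : dtm) (G : graph) (id : vertex G -> bits)
    (fuel : nat -> nat) (S : vertex G -> nstate) (u : vertex G) : nstate * bool :=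
  let recv := flatten [seq enc (msg (ns_send (S v)) (index u (nbrs id v))) ++ [:: SSep]
                      | v <- nbrs id u] in
  if ns_stop (S u) then (NS (ns_int (S u)) [::] true, true)
  else
    let C := run_until (fuel (clen recv + clen (ns_int (S u))))
                       (Cfg (q_start M) recv (ns_int (S u)) [::] 0 0 0) in
    (NS (tint C) (tsend C) (cst C == q_stop M), halted C).

(* global state after r rounds (plus flag: every run so far halted in time) *)
Fixpoint exec (M : dtm) (G : graph) (id kappa : vertex G -> bits)
    (fuel : nat -> nat) (r : nat) : (vertex G -> nstate) * bool :=
  match r with
  | 0 => (fun u => NS (init_int (glab u) (id u) (kappa u)) [::] false, true)
  | r'.+1 =>
      let (S, ok) := exec M id kappa fuel r' in
      (fun u => (node_round M id fuel S u).1,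
       ok && [forall u, (node_round M id fuel S u).2])
  end.

Definition accepts (M : dtm) (G : graph) (id kappa : vertex G -> bits) : Prop :=
  exists (fuel r : nat),
    let (S, ok) := exec M id kappa (fun _ => fuel) r in
    ok /\ (forall u, ns_stop (S u)) /\ (forall u, bits_of (ns_int (S u)) = [:: true]).

Definition local_poly (M : dtm) : Prop :=
  exists (c : nat) (q : seq nat),
    forall (G : graph) (id kappa : vertex G -> bits),
      locally_unique 1 id ->
      let (S, ok) := exec M id kappa (npoly q) c in
      ok /\ (forall u, ns_stop (S u)).

Definition gclass := (graph -> Prop) -> Prop.

Definition LP : gclass := fun P =>
  is_property P /\
  exists (M : dtm) (r_id : nat),
    1 <= r_id /\ local_poly M /\
    forall (G : graph) (id : vertex G -> bits),
      locally_unique r_id id -> (accepts M id (fun _ => [::]) <-> P G).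

Definition NLP : gclass := fun P =>
  is_property P /\
  exists (M : dtm) (r_id r : nat) (p : seq nat),
    1 <= r_id /\ 1 <= r /\ local_poly M /\
    forall (G : graph) (id : vertex G -> bits),
      locally_unique r_id id ->
      (P G <-> exists kappa, cert_bounded id r p kappa /\ accepts M id kappa).

(* C[B] = { P ∩ B : P ∈ C } (sets of graphs compared extensionally) *)
Definition restrict (C : gclass) (B : graph -> Prop) : gclass := fun Q =>
  exists P, C P /\ forall G, Q G <-> (P G /\ B G).

Definition strict_subclass (C D : gclass) : Prop :=
  (forall P, C P -> D P) /\ exists P, D P /\ ~ C P.

(* The inclusions are immediate: an LP decider is an NLP verifier that ignores
   its certificates; choosing the certificate bound p = 0 leaves only the empty
   certificate assignment, so acceptance is unchanged.

   The separating property is bipartiteness (2-colourability).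
   - It lies in NLP: the certificate of a node is one colour bit, and a
     two-round machine sends this bit to every neighbour and accepts iff all
     the bits it receives differ from its own ([verifier], [bipartite_NLP]).
   - Restricted to cycles (structural degree 2) it is not in LP.  A map
     between graphs that is a bijection on every neighbourhood and preserves
     labels, identifiers, certificates and neighbour order makes each node
     simulate its image, so both graphs are accepted or rejected together
     ([cover_accepts]).  With L = 4 r_id + 3, the even cycle on 2L nodes
     covers the odd cycle on L nodes by i |-> i mod L; identifiers 1^i on the
     small cycle lift to r_id-locally unique identifiers on the large one.
     A decider would thus accept the bipartite even cycle iff it accepts the
     non-bipartite odd cycle. *)
From HB Require Import structures.
From mathcomp Require Import all_boot zify.
From Stdlib Require Import FunctionalExtensionality.

Set Implicit Arguments.
Unset Strict Implicit.
Unset Printing Implicit Defensive.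

Section Runs.
Variable M : dtm.

Lemma run_until_halted n (C : cfg (state M)) : halted C -> run_until n C = C.
Proof. by case: n => //= n ->. Qed.

Lemma run_until_add k n (C : cfg (state M)) :
  run_until (k + n) C = run_until n (run_until k C).
Proof.
elim: k C => [|k IH] C //=.
by case: ifP => H; [rewrite run_until_halted | exact: IH].
Qed.

Lemma run_until_step n (C : cfg (state M)) :
  ~~ halted C -> run_until n.+1 C = run_until n (tm_step C).
Proof. by move=> /= /negbTE ->. Qed.

Lemma run_until_ge k f (C D : cfg (state M)) :
  run_until k C = D -> halted D -> k <= f -> run_until f C = D.
Proof.
by move=> E hD kf; rewrite -(subnKC kf) run_until_add E run_until_halted.
Qed.

Lemma run_until_halted_unique f g (C : cfg (state M)) :
  halted (run_until f C) -> halted (run_until g C) ->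
  run_until f C = run_until g C.
Proof.
move=> Hf Hg.
by rewrite -(run_until_halted g Hf) -(run_until_halted f Hg) -!run_until_add addnC.
Qed.

(* An execution in which every run halted in time does not depend on the
   step budget: this lets us compare the fuel of [accepts] with any other. *)
Lemma exec_fuel_irrelevant (G : graph) (id kappa : vertex G -> bits) F1 F2 r :
  (exec M id kappa F1 r).2 -> (exec M id kappa F2 r).2 ->
  forall u, (exec M id kappa F1 r).1 u = (exec M id kappa F2 r).1 u.
Proof.
elim: r => [|r IH] //=.
case E1: (exec M id kappa F1 r) => [S1 ok1].
case E2: (exec M id kappa F2 r) => [S2 ok2] /=.
move=> /andP[o1 /forallP h1] /andP[o2 /forallP h2] u.
rewrite E1 E2 /= in IH.
have HS : S1 = S2 by apply: functional_extensionality_dep => v; apply: IH.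
subst S2.
move: (h1 u) (h2 u); rewrite /node_round.
case: (ns_stop (S1 u)) => //= H1 H2.
by rewrite (run_until_halted_unique H1 H2).
Qed.

End Runs.

Lemma nbrs_mem (G : graph) (id : vertex G -> bits) u v :
  (v \in nbrs id u) = gadj u v.
Proof. by rewrite /nbrs mem_sort mem_filter mem_enum andbT. Qed.

Lemma index_map_in (T1 T2 : eqType) (f : T1 -> T2) (s : seq T1) x :
  x \in s -> {in s &, injective f} -> index (f x) (map f s) = index x s.
Proof.
elim: s => [|y s IH] //= xin inj.
case: (eqVneq y x) => [->|nyx]; first by rewrite eqxx.
have xs : x \in s by move: xin; rewrite inE eq_sym (negbTE nyx).
have -> : (f y == f x) = false.
  apply/negbTE/eqP => E; move/eqP: nyx; apply.
  by apply: inj; rewrite ?inE ?eqxx ?xs ?orbT.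
rewrite IH //.
by move=> a b ha hb; apply: inj; rewrite inE ?ha ?hb orbT.
Qed.

(* Covering maps.  [phi : G' -> G] is surjective, maps the ordered
   neighbour list of every node onto that of its image injectively, and
   preserves labels, identifiers and certificates.  Then every node of G'
   runs exactly as its image in G, round by round. *)
Section Cover.
Variables (M : dtm) (G' G : graph) (phi : vertex G' -> vertex G).
Variables (id' kappa' : vertex G' -> bits) (id kappa : vertex G -> bits).
Hypothesis phi_id : forall u, id' u = id (phi u).
Hypothesis phi_cert : forall u, kappa' u = kappa (phi u).
Hypothesis phi_lab : forall u, glab u = glab (phi u).
Hypothesis phi_nbrs : forall u, map phi (nbrs id' u) = nbrs id (phi u).
Hypothesis phi_inj_nbrs : forall v, {in nbrs id' v &, injective phi}.
Hypothesis phi_surj : forall v, exists u, phi u = v.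

Lemma cover_node_round F (S' : vertex G' -> nstate) S :
  (forall u, S' u = S (phi u)) ->
  forall u, node_round M id' F S' u = node_round M id F S (phi u).
Proof.
move=> HS u; rewrite /node_round.
set r1 := flatten _; set r2 := flatten _.
have -> : r1 = r2.
  rewrite /r1 /r2 -phi_nbrs -map_comp; congr flatten.
  apply/eq_in_map => v vin /=.
  rewrite HS -phi_nbrs index_map_in //.
  by rewrite nbrs_mem gadj_sym -(nbrs_mem id').
by rewrite HS.
Qed.

Lemma cover_exec F r :
  (forall u, (exec M id' kappa' F r).1 u = (exec M id kappa F r).1 (phi u)) /\
  (exec M id' kappa' F r).2 = (exec M id kappa F r).2.
Proof.
elim: r => [|r [IH1 IH2]] /=.
  by split=> // u; rewrite phi_id phi_cert phi_lab.
case E1: (exec M id' kappa' F r) => [S1 ok1].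
case E2: (exec M id kappa F r) => [S2 ok2] /=.
rewrite E1 E2 /= in IH1 IH2; subst ok2.
have HR := cover_node_round F IH1.
split=> [u|]; first by rewrite HR.
congr andb; apply/forallP/forallP => H x.
  by have [y <-] := phi_surj x; rewrite -HR.
by rewrite HR.
Qed.

Lemma cover_accepts : accepts M id' kappa' <-> accepts M id kappa.
Proof.
rewrite /accepts; split=> -[f [r H]]; exists f, r; move: H;
have [H1 H2] := cover_exec (fun _ => f) r;
case: (exec M id' kappa' (fun _ => f) r) H1 H2 => [S1 ok1];
case: (exec M id kappa (fun _ => f) r) => [S2 ok2] /= H1 <-;
move=> [ok [st out]]; split=> //; split => u.
- by have [y <-] := phi_surj u; rewrite -H1.
- by have [y <-] := phi_surj u; rewrite -H1.
- by rewrite H1.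
- by rewrite H1.
Qed.

End Cover.

(* LP ⊆ NLP: with the zero certificate bound only empty certificates are
   admissible, so an LP decider is an NLP verifier. *)
Lemma LP_sub_NLP P : LP P -> NLP P.
Proof.
case=> HP [M [rid [hr [hM HM]]]].
split=> //; exists M, rid, 1, [::]; do 3!split=> //.
move=> G id lu; rewrite -(HM G id lu); split.
  by move=> H; exists (fun _ => [::]).
case=> kappa [Hb Hacc].
suff -> : (fun _ : vertex G => [::] : bits) = kappa by [].
apply: functional_extensionality => u.
by have := Hb u; rewrite /npoly /=; case: (kappa u).
Qed.

Lemma graph_Delta_mono D D' G : D <= D' -> graph_Delta D G -> graph_Delta D' G.
Proof. by move=> hD HG u; apply: leq_trans (HG u) hD. Qed.

Definition bipartite (G : graph) : Prop :=
  exists f : vertex G -> bool, forall u v, gadj u v -> f u != f v.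

Lemma bipartite_property : is_property bipartite.
Proof.
move=> G H [f [[g fK gK] [Hadj _]]] [c Hc].
exists (fun x => c (g x)) => x y Hxy; apply: Hc.
by rewrite -Hadj !gK.
Qed.

(* Cycles.  [cycle_graph k] is the unlabeled cycle on the k+3 nodes
   0, ..., k+2, with i adjacent to i+1 and to i-1 modulo k+3. *)
Definition cycle_adj (n u v : nat) : bool :=
  (u.+1 == v) || (v.+1 == u) || ((u == 0) && (v == n.-1)) || ((v == 0) && (u == n.-1)).

Section Cycle.
Variable k : nat.
Local Notation n := k.+3.

Definition cadj : rel 'I_n := fun u v => cycle_adj n u v.

Lemma cadj_sym u v : cadj u v = cadj v u.
Proof. rewrite /cadj /cycle_adj; lia. Qed.

Lemma cadj_irr u : ~~ cadj u u.
Proof. rewrite /cadj /cycle_adj; lia. Qed.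

Lemma cadj_connect u v : connect cadj u v.
Proof.
have from0 i (Hi : i < n) : connect cadj ord0 (Ordinal Hi).
  elim: i Hi => [|i IH] Hi; first by rewrite (_ : Ordinal Hi = ord0) //; apply: val_inj.
  have Hi' : i < n by lia.
  apply: connect_trans (IH Hi') (connect1 _).
  by rewrite /cadj /cycle_adj /= eqxx.
apply: (@connect_trans _ _ ord0).
  rewrite (sym_connect_sym cadj_sym); case: u => u Hu; exact: from0.
case: v => v Hv; exact: from0.
Qed.

Definition cycle_graph : graph :=
  {| gsize := n; gadj := cadj; glab := fun _ => [::];
     gsize_pos := erefl; gadj_sym := cadj_sym; gadj_irr := cadj_irr;
     gconn := cadj_connect |}.

Lemma cycle_Delta2 : graph_Delta 2 cycle_graph.
Proof.
rewrite /graph_Delta /vertex /= => u; rewrite addn0 /degree.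
pose a : 'I_n := inord (if u.+1 == n then 0 else u.+1).
pose b : 'I_n := inord (if u == 0 :> nat then n.-1 else u.-1).
apply: (@leq_trans #|[set a; b]|); last by rewrite cards2; case: (a != b).
apply/subset_leq_card/subsetP; rewrite /vertex /= => v; rewrite !inE /= /cadj /cycle_adj.
have hu := ltn_ord u; have hv := ltn_ord v.
rewrite -!(inj_eq (@ord_inj _)) /a /b !inordK; try by case: ifP => /eqP; lia.
case: ifP => /eqP H1; case: ifP => /eqP H2; rewrite /= ?orbF; lia.
Qed.

Lemma cycle_ball (u v : 'I_n) j : ball (G := cycle_graph) j u v ->
  (v <= u + j /\ u <= v + j) \/ (v + n <= u + j) \/ (u + n <= v + j).
Proof.
elim: j v => [|j IH] v /=; first by move/eqP => ->; lia.
case/orP => [/IH|/existsP[w /andP[/IH Hw]]]; first by lia.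
rewrite /cadj /cycle_adj /=.
have := ltn_ord u; have := ltn_ord v; have := ltn_ord w.
move: Hw; rewrite /vertex /=; lia.
Qed.

End Cycle.

Lemma even_cycle_bipartite a : bipartite (cycle_graph (a.+3 + a)).
Proof.
exists (fun v => odd v) => u v; rewrite /= /cadj /cycle_adj.
have := ltn_ord u; have := ltn_ord v; rewrite /vertex /=; lia.
Qed.

(* The cycle on 4r+3 nodes is odd, hence not 2-colourable: a colouring would
   alternate along the path 0, 1, ..., 4r+2, giving nodes 0 and 4r+2
   the same colour although they are adjacent. *)
Lemma odd_cycle_not_bipartite r : ~ bipartite (cycle_graph (4 * r)).
Proof.
case=> f Hf.
have alternate i : i < (4 * r).+3 -> f (inord i) = f (inord 0) (+) odd i.
  elim: i => [|i IH] Hi; first by rewrite addbF.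
  have := Hf (inord i) (inord i.+1).
  rewrite /= /cadj /cycle_adj !inordK; [|lia|lia].
  rewrite eqxx /= => /(_ isT).
  rewrite IH; last by lia.
  by case: (f (inord i.+1)); case: (f (inord 0)); case: (odd i).
have := Hf (inord 0) (inord (4 * r).+2).
rewrite /= /cadj /cycle_adj !inordK; [|lia|lia].
rewrite [f (inord (4 * r).+2)]alternate //.
have -> : odd (4 * r).+2 = false by lia.
rewrite addbF eqxx => /(_ _)/negP; apply; lia.
Qed.

Lemma lexle_total s t : lexle s t || lexle t s.
Proof.
elim: s t => [|b s IH] [|c t] //=.
by case: b; case: c => //=; apply: IH.
Qed.

Lemma lexle_trans s t w : lexle s t -> lexle t w -> lexle s w.
Proof.
elim: s t w => [|b s IH] [|c t] [|d w] //=.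
by case: b c d => -[] [] //=; apply: IH.
Qed.

Lemma lexle_anti s t : lexle s t -> lexle t s -> s = t.
Proof.
elim: s t => [|b s IH] [|c t] //=.
by case: b c => -[] //= H1 H2; rewrite (IH t).
Qed.

(* The double cover of the cycle on L = a+3 nodes by the cycle on 2L nodes,
   folding node i onto i mod L, with unary identifiers 1^i on the small cycle
   and their pull-backs on the large one. *)
Section DoubleCover.
Variable a : nat.
Local Notation L := a.+3.
Local Notation N := (a.+3 + a).+3.

Definition fold_cycle (i : 'I_N) : 'I_L := inord (if i < L then (i : nat) else i - L).
Definition unary_id (i : 'I_L) : bits := nseq i true.
Definition lifted_id (i : 'I_N) : bits := unary_id (fold_cycle i).

Lemma fold_cycleE (i : 'I_N) :
  nat_of_ord (fold_cycle i) = if i < L then (i : nat) else i - L.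
Proof. rewrite inordK //; have := ltn_ord i; case: ifP; lia. Qed.

Lemma unary_id_inj : injective unary_id.
Proof. by move=> x y /(congr1 size); rewrite !size_nseq => /ord_inj. Qed.

Lemma fold_cycle_surj (w : 'I_L) : exists v : 'I_N, fold_cycle v = w.
Proof.
exists (inord w); apply: ord_inj; have hw := ltn_ord w.
by rewrite fold_cycleE inordK; [case: ifP; lia | lia].
Qed.

Lemma fold_cycle_adj (u v : 'I_N) : cadj u v -> cadj (fold_cycle u) (fold_cycle v).
Proof.
rewrite /cadj /cycle_adj !fold_cycleE.
have := ltn_ord u; have := ltn_ord v.
case: (ltnP u L); case: (ltnP v L); lia.
Qed.

Lemma fold_cycle_inj_nbrs (v x y : 'I_N) :
  cadj v x -> cadj v y -> fold_cycle x = fold_cycle y -> x = y.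
Proof.
move=> h1 h2 /(congr1 (@nat_of_ord _)); rewrite !fold_cycleE => E.
apply: ord_inj; move: h1 h2 E; rewrite /cadj /cycle_adj.
have := ltn_ord v; have := ltn_ord x; have := ltn_ord y.
case: (ltnP x L); case: (ltnP y L); lia.
Qed.

Lemma fold_cycle_lift_adj (u : 'I_N) (w : 'I_L) : cadj (fold_cycle u) w ->
  exists2 v : 'I_N, cadj u v & fold_cycle v = w.
Proof.
have hw := ltn_ord w; have hu := ltn_ord u.
have p1 : fold_cycle (inord w) = w.
  by apply: ord_inj; rewrite fold_cycleE inordK; [case: ifP; lia|lia].
have p2 : fold_cycle (inord (w + L)) = w.
  by apply: ord_inj; rewrite fold_cycleE inordK; [case: ifP; lia|lia].
rewrite /cadj /cycle_adj fold_cycleE => H.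
have : cycle_adj N u w || cycle_adj N u (w + L).
  by move: H; rewrite /cycle_adj; case: (ltnP u L); lia.
case/orP => Ha.
  by exists (inord w) => //; rewrite /cadj inordK //; lia.
by exists (inord (w + L)) => //; rewrite /cadj inordK //; lia.
Qed.

Lemma fold_cycle_nbrs (u : vertex (cycle_graph (a.+3 + a))) :
  map fold_cycle (nbrs (G := cycle_graph (a.+3 + a)) lifted_id u) =
  nbrs (G := cycle_graph a) unary_id (fold_cycle u).
Proof.
rewrite /nbrs.
set s := [seq v <- _ | _].
rewrite (_ : sort _ s =
    sort (relpre fold_cycle (fun v w => lexle (unary_id v) (unary_id w))) s) //.
rewrite -sort_map; apply/perm_sort_inP.
- by move=> x y _ _; apply: lexle_total.
- by move=> x y z _ _ _; apply: lexle_trans.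
- by move=> x y _ _ /andP[h1 h2]; apply/unary_id_inj/lexle_anti.
apply: uniq_perm.
- rewrite map_inj_in_uniq; first by rewrite filter_uniq // enum_uniq.
  move=> x y; rewrite !mem_filter => /andP[hx _] /andP[hy _].
  exact: fold_cycle_inj_nbrs hx hy.
- by rewrite filter_uniq // enum_uniq.
move=> w; rewrite mem_filter mem_enum andbT /=.
apply/mapP/idP.
  by case=> v; rewrite mem_filter mem_enum andbT => /fold_cycle_adj h ->.
case/fold_cycle_lift_adj => v hv <-; exists v => //.
by rewrite mem_filter mem_enum andbT.
Qed.

Lemma unary_id_locally_unique r : locally_unique (G := cycle_graph a) r unary_id.
Proof. by move=> u v nuv _; apply: contra nuv => /eqP/unary_id_inj ->. Qed.

(* Nodes of the large cycle with the same identifier are antipodal, at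
   distance L; so the lifted identifiers are r-locally unique when 2r < L. *)
Lemma lifted_id_locally_unique r : 2 * r < L ->
  locally_unique (G := cycle_graph (a.+3 + a)) r lifted_id.
Proof.
rewrite /locally_unique /vertex /= => hr u v nuv Hb.
apply/negP => /eqP /unary_id_inj /(congr1 (@nat_of_ord _)).
rewrite !fold_cycleE => E.
move: nuv Hb => /negP nuv /cycle_ball Hb; apply: nuv; apply/eqP/ord_inj.
move: E Hb; have := ltn_ord u; have := ltn_ord v.
case: (ltnP u L); case: (ltnP v L); lia.
Qed.

Lemma double_cover_accepts (M : dtm) :
  accepts M (G := cycle_graph (a.+3 + a)) lifted_id (fun _ => [::]) <->
  accepts M (G := cycle_graph a) unary_id (fun _ => [::]).
Proof.
apply: (@cover_accepts M (cycle_graph (a.+3 + a)) (cycle_graph a) fold_cycle) => //.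
- exact: fold_cycle_nbrs.
- by move=> v x y; rewrite !nbrs_mem; apply: fold_cycle_inj_nbrs.
- exact: fold_cycle_surj.
Qed.

End DoubleCover.

Lemma bipartite_not_LP_Delta2 :
  ~ exists Q, LP Q /\ forall G, graph_Delta 2 G -> (Q G <-> bipartite G).
Proof.
case=> Q [[_ [M [rid [_ [_ HM]]]]] HQ].
have hr : 2 * rid < (4 * rid).+3 by lia.
have HB := HM _ _ (@unary_id_locally_unique (4 * rid) rid).
have HT := HM _ _ (lifted_id_locally_unique hr).
move: HT; rewrite double_cover_accepts HB.
rewrite (HQ _ (@cycle_Delta2 _)) (HQ _ (@cycle_Delta2 _)) => -[_ Hodd].
by apply: (@odd_cycle_not_bipartite rid); apply/Hodd/even_cycle_bipartite.
Qed.

(* The colour of a node is the last bit of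
   its initial internal tape, i.e. of its certificate when it is one bit.
   Round 1: scan the internal tape, overwriting it with left-end markers and
     remembering whether its last symbol is 1; write that colour after it, send
     it to each neighbour (one per separator on the receiving tape), pause.
   Round 2: skip the markers to reach the colour c, compare it with every
     received bit, overwrite it with 1 if all differ and with a marker
     otherwise, and stop. *)
Inductive vstate := Start | Dispatch | Scan of bool | Send of bool | SendSep of bool
  | Find | Check of bool & bool | Pause | Stop.

Definition vstate_code (s : vstate) :
    unit + unit + bool + bool + bool + unit + (bool * bool) + unit + unit :=
  match s with
  | Start => inl (inl (inl (inl (inl (inl (inl (inl tt)))))))
  | Dispatch => inl (inl (inl (inl (inl (inl (inl (inr tt)))))))
  | Scan b => inl (inl (inl (inl (inl (inl (inr b))))))
  | Send b => inl (inl (inl (inl (inl (inr b)))))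
  | SendSep b => inl (inl (inl (inl (inr b))))
  | Find => inl (inl (inl (inr tt)))
  | Check b c => inl (inl (inr (b, c)))
  | Pause => inl (inr tt)
  | Stop => inr tt
  end.

Definition vstate_decode
    (x : unit + unit + bool + bool + bool + unit + (bool * bool) + unit + unit) :
    vstate :=
  match x with
  | inl (inl (inl (inl (inl (inl (inl (inl _))))))) => Start
  | inl (inl (inl (inl (inl (inl (inl (inr _))))))) => Dispatch
  | inl (inl (inl (inl (inl (inl (inr b)))))) => Scan b
  | inl (inl (inl (inl (inl (inr b))))) => Send b
  | inl (inl (inl (inl (inr b)))) => SendSep b
  | inl (inl (inl (inr _))) => Find
  | inl (inl (inr (b, c))) => Check b c
  | inl (inr _) => Pause
  | inr _ => Stop
  end.

Lemma vstate_codeK : cancel vstate_code vstate_decode. Proof. by case. Qed.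

HB.instance Definition _ := Equality.copy vstate (can_type vstate_codeK).
HB.instance Definition _ := Choice.copy vstate (can_type vstate_codeK).
HB.instance Definition _ := Countable.copy vstate (can_type vstate_codeK).
HB.instance Definition _ := Finite.copy vstate (can_type vstate_codeK).

Definition nat_of_sym (s : sym) : nat :=
  match s with SLend => 0 | SBlank => 1 | SSep => 2 | S0 => 3 | S1 => 4 end.
Definition sym_of_nat (n : nat) : option sym :=
  match n with 0 => Some SLend | 1 => Some SBlank | 2 => Some SSep | 3 => Some S0
  | 4 => Some S1 | _ => None end.
Lemma nat_of_symK : pcancel nat_of_sym sym_of_nat. Proof. by case. Qed.
HB.instance Definition _ := Equality.copy sym (pcan_type nat_of_symK).

Local Notation sb := sym_of_bit.

Definition stay := (MoveS, MoveS, MoveS).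

Definition scan_delta (f : bool) (r i s : sym) :=
  match i with
  | SBlank => (Send f, (r, sb f, s), (MoveR, MoveS, MoveR))
  | S1 => (Scan true, (r, SLend, s), (MoveS, MoveR, MoveS))
  | _ => (Scan false, (r, SLend, s), (MoveS, MoveR, MoveS))
  end.

Definition verifier_delta (q : vstate) (x : sym * sym * sym) :
    vstate * (sym * sym * sym) * (move * move * move) :=
  let: (r, i, s) := x in
  match q with
  | Start => (Dispatch, (r, i, s), (MoveS, MoveR, MoveS))
  | Dispatch => if i is SLend then (Find, (r, i, s), (MoveS, MoveR, MoveS))
                else scan_delta false r i s
  | Scan f => scan_delta f r i s
  | Send c => match r with
       | SSep => (SendSep c, (r, i, sb c), (MoveS, MoveS, MoveR))
       | SBlank => (Pause, (r, i, SSep), stay)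
       | _ => (Send c, (r, i, s), (MoveR, MoveS, MoveS))
       end
  | SendSep c => (Send c, (r, i, SSep), (MoveR, MoveS, MoveR))
  | Find => match i with
       | SLend => (Find, (r, i, s), (MoveS, MoveR, MoveS))
       | S0 => (Check false true, (r, i, s), (MoveR, MoveS, MoveS))
       | S1 => (Check true true, (r, i, s), (MoveR, MoveS, MoveS))
       | _ => (Stop, (r, i, s), stay)
       end
  | Check c ok => match r with
       | S0 => (Check c (ok && c), (r, i, s), (MoveR, MoveS, MoveS))
       | S1 => (Check c (ok && ~~ c), (r, i, s), (MoveR, MoveS, MoveS))
       | SBlank => (Stop, (r, (if ok then S1 else SLend), s), stay)
       | _ => (Check c ok, (r, i, s), (MoveR, MoveS, MoveS))
       end
  | Pause => (Pause, (r, i, s), stay)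
  | Stop => (Stop, (r, i, s), stay)
  end.

Definition verifier : dtm :=
  {| state := vstate; q_start := Start; q_pause := Pause; q_stop := Stop;
     q_start_pause := erefl; q_start_stop := erefl; q_pause_stop := erefl;
     delta := verifier_delta |}.

Local Notation V q rt it st hr hi hs := (@Cfg (state verifier) q rt it st hr hi hs).

(* Reading and writing at the cell just after a prefix p ([twrite] at a
   successor position simplifies to [set_nth]). *)
Lemma set_nth_mid (p t : tape) x y :
  set_nth SBlank (p ++ x :: t) (size p) y = p ++ y :: t.
Proof. by elim: p => //= z p ->. Qed.
Lemma set_nth_end (p : tape) y : set_nth SBlank p (size p) y = p ++ [:: y].
Proof. by elim: p => //= z p ->. Qed.

Lemma tread_mid (p t : tape) x h : h = (size p).+1 -> tread (p ++ x :: t) h = x.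
Proof. by move=> -> /=; elim: p. Qed.
Lemma tread_end (p : tape) h : h = (size p).+1 -> tread p h = SBlank.
Proof. by move=> -> /=; elim: p. Qed.
Definition nonblank (x : sym) := x != SBlank.

(* [last_bit f t]: whether the last symbol of t is 1 (f if t is empty). *)
Definition last_bit (f : bool) (t : tape) := foldl (fun _ x => x == S1) f t.

(* Accumulator of round 2: ok stays true while received bits differ from c. *)
Definition check_acc (c ok : bool) (x : sym) :=
  match x with S0 => ok && c | S1 => ok && ~~ c | _ => ok end.

Lemma start_step rt t sp : tm_step (V Start rt t sp 0 0 0) = V Dispatch rt t sp 0 1 0.
Proof. by []. Qed.

Lemma dispatch_scan_step rt x t sp : nonblank x -> x != SLend ->
  tm_step (V Dispatch rt (x :: t) sp 0 1 0) =
  V (Scan (x == S1)) rt (SLend :: t) sp 0 2 0.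
Proof. by case: x. Qed.

Lemma scan_step f (p t : tape) x rt sp : nonblank x ->
  tm_step (V (Scan f) rt (p ++ x :: t) sp 0 (size p).+1 0) =
  V (Scan (x == S1)) rt (p ++ SLend :: t) sp 0 (size p).+2 0.
Proof.
move=> hx; rewrite /tm_step tread_mid //=.
by case: x hx => //= _; rewrite ?set_nth_mid.
Qed.

Lemma scan_end_step f (p : tape) rt sp :
  tm_step (V (Scan f) rt p sp 0 (size p).+1 0) =
  V (Send f) rt (p ++ [:: sb f]) sp 1 (size p).+1 1.
Proof. by rewrite /tm_step (tread_end (p:=p)) //= ?set_nth_end. Qed.

Lemma send_step c (p q ip sp : tape) y :
  tm_step (V (Send c) (p ++ SSep :: q) (ip ++ [:: y]) sp
             (size p).+1 (size ip).+1 (size sp).+1) =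
  V (SendSep c) (p ++ SSep :: q) (ip ++ [:: y]) (sp ++ [:: sb c])
    (size p).+1 (size ip).+1 (size sp).+2.
Proof.
rewrite /tm_step (tread_mid (p:=p)) // (tread_mid (p:=ip)) // (tread_end (p:=sp)) //=.
by rewrite ?set_nth_mid ?set_nth_end.
Qed.

Lemma send_sep_step c (p q ip sp : tape) y :
  tm_step (V (SendSep c) (p ++ SSep :: q) (ip ++ [:: y]) sp
             (size p).+1 (size ip).+1 (size sp).+1) =
  V (Send c) (p ++ SSep :: q) (ip ++ [:: y]) (sp ++ [:: SSep])
    (size p).+2 (size ip).+1 (size sp).+2.
Proof.
rewrite /tm_step (tread_mid (p:=p)) // (tread_mid (p:=ip)) // (tread_end (p:=sp)) //=.
by rewrite ?set_nth_mid ?set_nth_end.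
Qed.

Lemma send_end_step c (p ip sp : tape) y hr hi hs :
  hr = (size p).+1 -> hi = (size ip).+1 -> hs = (size sp).+1 ->
  tm_step (V (Send c) p (ip ++ [:: y]) sp hr hi hs) =
  V Pause (p ++ [:: SBlank]) (ip ++ [:: y]) (sp ++ [:: SSep]) hr hi hs.
Proof.
move=> -> -> ->.
rewrite /tm_step (tread_end (p:=p)) // (tread_mid (p:=ip)) // (tread_end (p:=sp)) //=.
by rewrite ?set_nth_mid ?set_nth_end.
Qed.

Lemma dispatch_find_step rt t sp :
  tm_step (V Dispatch rt (SLend :: t) sp 0 1 0) = V Find rt (SLend :: t) sp 0 2 0.
Proof. by []. Qed.

Lemma find_step (p t : tape) rt sp :
  tm_step (V Find rt (p ++ SLend :: t) sp 0 (size p).+1 0) =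
  V Find rt (p ++ SLend :: t) sp 0 (size p).+2 0.
Proof. by rewrite /tm_step tread_mid //= ?set_nth_mid. Qed.

Lemma find_end_step (p : tape) c rt sp h : h = (size p).+1 ->
  tm_step (V Find rt (p ++ [:: sb c]) sp 0 h 0) =
  V (Check c true) rt (p ++ [:: sb c]) sp 1 (size p).+1 0.
Proof.
by move=> ->; rewrite /tm_step tread_mid //=; case: c => /=; rewrite ?set_nth_mid.
Qed.

Lemma check_step c ok (p q ip sp : tape) x y : nonblank x ->
  tm_step (V (Check c ok) (p ++ x :: q) (ip ++ [:: y]) sp (size p).+1 (size ip).+1 0) =
  V (Check c (check_acc c ok x)) (p ++ x :: q) (ip ++ [:: y]) sp
    (size p).+2 (size ip).+1 0.
Proof.
move=> hx; rewrite /tm_step (tread_mid (p:=p)) // (tread_mid (p:=ip)) //=.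
by case: x hx => //= _; rewrite ?set_nth_mid.
Qed.

Lemma check_end_step c ok (p ip sp it : tape) y hr hi :
  it = ip ++ [:: y] -> hr = (size p).+1 -> hi = (size ip).+1 ->
  tm_step (V (Check c ok) p it sp hr hi 0) =
  V Stop (p ++ [:: SBlank]) (ip ++ [:: if ok then S1 else SLend]) sp hr hi 0.
Proof.
move=> -> -> ->.
by rewrite /tm_step (tread_end (p:=p)) // (tread_mid (p:=ip)) //= ?set_nth_mid ?set_nth_end.
Qed.

Lemma scan_loop t p f rt sp : all nonblank t ->
  run_until (size t) (V (Scan f) rt (p ++ t) sp 0 (size p).+1 0) =
  V (Scan (last_bit f t)) rt (p ++ nseq (size t) SLend) sp 0 (size p + size t).+1 0.
Proof.
elim: t p f => [|x t IH] p f; first by rewrite /= !cats0 addn0.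
move=> /andP[hx ht]; rewrite run_until_step // scan_step //.
have -> : p ++ SLend :: t = rcons p SLend ++ t by rewrite cat_rcons.
have -> : (size p).+2 = (size (rcons p SLend)).+1 by rewrite size_rcons.
by rewrite IH // size_rcons addSnnS -cat_rcons.
Qed.

Lemma send_loop c k p sp ip y :
  run_until (2 * k) (V (Send c) (p ++ nseq k SSep) (ip ++ [:: y]) sp
                       (size p).+1 (size ip).+1 (size sp).+1) =
  V (Send c) (p ++ nseq k SSep) (ip ++ [:: y]) (sp ++ flatten (nseq k [:: sb c; SSep]))
    (size p + k).+1 (size ip).+1 (size sp + 2 * k).+1.
Proof.
elim: k p sp => [|k IH] p sp; first by rewrite /= !cats0 !addn0.
rewrite mulnS !addSn add0n run_until_step // send_step run_until_step //.
have E0 : (size sp).+2 = (size (sp ++ [:: sb c])).+1 by rewrite size_cat addn1.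
rewrite E0 send_sep_step.
have E1 : p ++ nseq k.+1 SSep = rcons p SSep ++ nseq k SSep by rewrite cat_rcons.
have E2 : (size p).+2 = (size (rcons p SSep)).+1 by rewrite size_rcons.
have E3 : (size (sp ++ [:: sb c])).+2 = (size ((sp ++ [:: sb c]) ++ [:: SSep])).+1
  by rewrite !size_cat /= addn1 addn1.
rewrite E1 E2 E3 IH -E1; congr Cfg.
- by rewrite -!catA.
- by rewrite size_rcons; lia.
- by rewrite !size_cat /=; lia.
Qed.

Lemma find_loop k p t rt sp :
  run_until k (V Find rt (p ++ nseq k SLend ++ t) sp 0 (size p).+1 0) =
  V Find rt (p ++ nseq k SLend ++ t) sp 0 (size p + k).+1 0.
Proof.
elim: k p => [|k IH] p; first by rewrite addn0.
rewrite run_until_step // find_step.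
have E1 : p ++ nseq k.+1 SLend ++ t = rcons p SLend ++ nseq k SLend ++ t
  by rewrite cat_rcons.
have E2 : (size p).+2 = (size (rcons p SLend)).+1 by rewrite size_rcons.
by rewrite E1 E2 IH size_rcons addSnnS.
Qed.

Lemma check_loop c q p ok ip y sp : all nonblank q ->
  run_until (size q) (V (Check c ok) (p ++ q) (ip ++ [:: y]) sp (size p).+1 (size ip).+1 0) =
  V (Check c (foldl (check_acc c) ok q)) (p ++ q) (ip ++ [:: y]) sp
    (size p + size q).+1 (size ip).+1 0.
Proof.
elim: q p ok => [|x q IH] p ok; first by rewrite /= addn0.
move=> /andP[hx hq]; rewrite run_until_step // check_step //.
have E1 : p ++ x :: q = rcons p x ++ q by rewrite cat_rcons.
have E2 : (size p).+2 = (size (rcons p x)).+1 by rewrite size_rcons.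
by rewrite E1 E2 IH // size_rcons addSnnS.
Qed.

Lemma verifier_round1 (t : tape) d :
  all nonblank t -> head SBlank t != SLend -> t != [::] ->
  run_until (size t + 2 * d + 3) (V Start (nseq d SSep) t [::] 0 0 0) =
  V Pause (nseq d SSep ++ [:: SBlank]) (nseq (size t) SLend ++ [:: sb (last_bit false t)])
    (flatten (nseq d [:: sb (last_bit false t); SSep]) ++ [:: SSep])
    d.+1 (size t).+1 (2 * d).+1.
Proof.
case: t => [//|x t'] /andP[hx ht] hxl _.
rewrite (_ : last_bit false (x :: t') = last_bit (x == S1) t') //.
set col := last_bit (x == S1) t'.
have -> : size (x :: t') + 2 * d + 3 = (size t' + (2 * d + 2)).+2 by rewrite /=; lia.
rewrite run_until_step // start_step run_until_step // dispatch_scan_step //.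
rewrite run_until_add.
have := scan_loop [:: SLend] (x == S1) (nseq d SSep) [::] ht.
rewrite /= => ->.
rewrite addn2 run_until_step //.
have E : (size t').+2 = (size (SLend :: nseq (size t') SLend)).+1
  by rewrite /= size_nseq.
rewrite E scan_end_step -addn1 run_until_add.
rewrite (send_loop col d [::] [::] (SLend :: nseq (size t') SLend) (sb col)).
have Hs : size (flatten (nseq d [:: sb col; SSep])) = 2 * d.
  by elim: d {E} => //= d ->; lia.
rewrite run_until_step // send_end_step //; last by rewrite Hs.
  by rewrite /= size_nseq !add0n addn1.
by rewrite /= size_nseq.
Qed.

Lemma verifier_round2 n c rt : all nonblank rt -> 0 < n ->
  run_until (n + size rt + 3) (V Start rt (nseq n SLend ++ [:: sb c]) [::] 0 0 0) =
  V Stop (rt ++ [:: SBlank])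
    (nseq n SLend ++ [:: if foldl (check_acc c) true rt then S1 else SLend])
    [::] (size rt).+1 n.+1 0.
Proof.
case: n => [//|m] hrt _.
have -> : m.+1 + size rt + 3 = (m + (size rt).+2).+2 by lia.
rewrite run_until_step // start_step run_until_step // dispatch_find_step.
rewrite run_until_add.
have H := find_loop m [:: SLend] [:: sb c] rt [::].
rewrite /= in H; rewrite H run_until_step //.
rewrite (find_end_step (p := SLend :: nseq m SLend)); last by rewrite /= size_nseq.
rewrite -addn1 run_until_add.
have H2 := check_loop c [::] true (SLend :: nseq m SLend) (sb c) [::] hrt.
rewrite /= in H2; rewrite H2 run_until_step //.
rewrite (@check_end_step _ _ _ (SLend :: nseq m SLend) _ _ (sb c)) //.
by rewrite /= size_nseq add0n addn1.
Qed.

Lemma clen_nonblank t : all nonblank t -> clen t = size t.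
Proof.
rewrite /clen -(size_rev t) -all_rev; case: (rev t) => //= x r /andP[hx _].
by case: x hx.
Qed.

Lemma enc_nonblank s : all nonblank (enc s).
Proof. by elim: s => //= b s ->; case: b. Qed.

Lemma init_nonblank l i k : all nonblank (init_int l i k).
Proof. by rewrite /init_int all_cat /= all_cat /= !enc_nonblank. Qed.

Lemma init_head l i k : head SBlank (init_int l i k) != SLend.
Proof. by rewrite /init_int; case: l => //= b l; case: b. Qed.

Lemma init_nonempty l i k : init_int l i k != [::].
Proof. by rewrite /init_int; case: l. Qed.

Lemma last_bit_init l i b : last_bit false (init_int l i [:: b]) = b.
Proof.
have -> : init_int l i [:: b] = (enc l ++ SSep :: enc i ++ [:: SSep]) ++ [:: sb b].
  by rewrite /init_int -catA /= -catA.
by rewrite /last_bit foldl_cat; case: b.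
Qed.

Lemma bits_of_output n x : bits_of (nseq n SLend ++ [:: x]) = bits_of [:: x].
Proof. by elim: n. Qed.

Lemma msg_nil i : msg [::] i = [::].
Proof. by rewrite /msg; case: i => [|i] //=; rewrite nth_nil. Qed.

Lemma flatten_empty_msgs (T : Type) (s : seq T) :
  flatten [seq enc [::] ++ [:: SSep] | _ <- s] = nseq (size s) SSep.
Proof. by elim: s => //= _ s ->. Qed.

Lemma msg_colour k b rest i : i < k ->
  msg (flatten (nseq k [:: sb b; SSep]) ++ rest) i = [:: b].
Proof.
have split_colours : split_sep (flatten (nseq k [:: sb b; SSep]) ++ rest) =
    nseq k [:: sb b] ++ split_sep rest by elim: k => //= k ->; case: b.
move=> hi; rewrite /msg split_colours nth_cat size_nseq hi nth_nseq hi.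
by case: (b).
Qed.

(* Round 2 receives the colours of the neighbours, each followed by #. *)
Definition colour_tape (T : Type) (f : T -> bool) (s : seq T) : tape :=
  flatten [seq [:: sb (f v); SSep] | v <- s].

Lemma check_colour_tape (T : Type) (f : T -> bool) c ok (s : seq T) :
  foldl (check_acc c) ok (colour_tape f s) = ok && all (fun v => f v != c) s.
Proof.
elim: s ok => [|v s IH] ok /=; first by rewrite andbT.
by rewrite IH; case: (f v); case: ok; case: (c).
Qed.

Lemma colour_tape_nonblank (T : Type) (f : T -> bool) (s : seq T) :
  all nonblank (colour_tape f s).
Proof. by elim: s => //= v s ->; case: (f v). Qed.

Lemma size_colour_tape (T : Type) (f : T -> bool) (s : seq T) :
  size (colour_tape f s) = 2 * size s.
Proof. by elim: s => //= v s ->; lia. Qed.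

Section VerifierExec.
Variables (G : graph) (id kappa : vertex G -> bits) (F : nat -> nat).

Definition init_tape (u : vertex G) := init_int (glab u) (id u) (kappa u).
Definition init_len u := size (init_tape u).
Definition deg u := size (nbrs id u).
Definition colour u := last_bit false (init_tape u).
Definition proper_at u := all (fun v => colour v != colour u) (nbrs id u).

Definition state_after1 u := NS (nseq (init_len u) SLend ++ [:: sb (colour u)])
  (flatten (nseq (deg u) [:: sb (colour u); SSep]) ++ [:: SSep]) false.
Definition state_after2 u :=
  NS (nseq (init_len u) SLend ++ [:: if proper_at u then S1 else SLend]) [::] true.

Hypothesis F_round1 : forall u, init_len u + 2 * deg u + 3 <= F (deg u + init_len u).
Hypothesis F_round2 :
  forall u, init_len u + 2 * deg u + 3 <= F (2 * deg u + (init_len u).+1).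

Lemma node_round1 u :
  node_round verifier id F (fun v => NS (init_tape v) [::] false) u = (state_after1 u, true).
Proof.
rewrite /node_round /=.
under eq_map do rewrite msg_nil.
rewrite flatten_empty_msgs -/(deg u).
have E := verifier_round1 (deg u) (init_nonblank (glab u) (id u) (kappa u))
  (init_head _ _ _) (init_nonempty _ _ _).
rewrite clen_nonblank ?all_nseq ?orbT // size_nseq clen_nonblank ?init_nonblank //.
by rewrite (run_until_ge E) //; have := F_round1 u; rewrite /init_len /init_tape.
Qed.

Lemma node_round2 u : node_round verifier id F state_after1 u = (state_after2 u, true).
Proof.
rewrite /node_round /=.
have -> : flatten [seq enc (msg (ns_send (state_after1 v)) (index u (nbrs id v))) ++ [:: SSep]
              | v <- nbrs id u] = colour_tape colour (nbrs id u).
  congr flatten; apply/eq_in_map => v; rewrite nbrs_mem => huv /=.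
  by rewrite msg_colour // /deg index_mem nbrs_mem gadj_sym.
have E := verifier_round2 (colour u) (colour_tape_nonblank colour (nbrs id u))
  (n := init_len u).
rewrite /init_len lt0n size_eq0 init_nonempty in E.
have {}E := E isT.
rewrite clen_nonblank ?colour_tape_nonblank // clen_nonblank; last first.
  by rewrite all_cat all_nseq orbT /=; case: (colour u).
rewrite size_colour_tape size_cat size_nseq addn1 -/(init_len u) -/(deg u).
rewrite (run_until_ge E) //; last first.
  by rewrite size_colour_tape -/(deg u) -/(init_len u); have := F_round2 u.
by rewrite check_colour_tape.
Qed.

Lemma verifier_exec r :
  (exec verifier id kappa F r).2 /\
  forall u, (exec verifier id kappa F r).1 u =
    match r with
    | 0 => NS (init_tape u) [::] false | 1 => state_after1 u | _ => state_after2 u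
    end.
Proof.
elim: r => [|r [IH1 IH2]] //=.
case E: (exec verifier id kappa F r) IH1 IH2 => [S ok] /= -> IH2.
have -> : S = (fun u => match r with
    | 0 => NS (init_tape u) [::] false | 1 => state_after1 u | _ => state_after2 u
    end) by apply: functional_extensionality => u; rewrite IH2.
case: r {E IH2} => [|[|r]].
- by split=> [|u]; [apply/forallP => u|]; rewrite node_round1.
- by split=> [|u]; [apply/forallP => u|]; rewrite node_round2.
- by split=> [|u]; [apply/forallP => u|].
Qed.

End VerifierExec.

Lemma verifier_local_poly : local_poly verifier.
Proof.
exists 2, [:: 3; 2] => G id kappa _.
have [ok Hs] := @verifier_exec G id kappa (npoly [:: 3; 2])
  (fun u => ltac:(rewrite /npoly /=; lia)) (fun u => ltac:(rewrite /npoly /=; lia)) 2.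
case: (exec verifier id kappa (npoly [:: 3; 2]) 2) ok Hs => [S o] /= ok Hs.
by split=> // u; rewrite Hs.
Qed.

Definition verifier_fuel (G : graph) (id kappa : vertex G -> bits) : nat :=
  \max_(u : vertex G) (init_len id kappa u + 2 * deg id u + 3).

Lemma verifier_exec_fuel (G : graph) (id kappa : vertex G -> bits) r :
  let F := fun _ => verifier_fuel id kappa in
  (exec verifier id kappa F r).2 /\
  forall u, (exec verifier id kappa F r).1 u =
    match r with
    | 0 => NS (init_tape id kappa u) [::] false
    | 1 => state_after1 id kappa u | _ => state_after2 id kappa u
    end.
Proof.
by apply: verifier_exec => u;
  exact: (@leq_bigmax _ (fun u => init_len id kappa u + 2 * deg id u + 3) u).
Qed.

Lemma verifier_complete (G : graph) (id : vertex G -> bits) (f : vertex G -> bool) :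
  (forall u v, gadj u v -> f u != f v) -> accepts verifier id (fun u => [:: f u]).
Proof.
move=> Hf; exists (verifier_fuel id (fun u => [:: f u])), 2.
have [ok Hs] := verifier_exec_fuel id (fun u => [:: f u]) 2.
case: (exec _ _ _ _ 2) ok Hs => [S o] /= ok Hs.
split=> //; split=> u; rewrite Hs //= bits_of_output.
suff -> : proper_at id (fun u => [:: f u]) u by [].
apply/allP => v; rewrite nbrs_mem => huv.
by rewrite /colour /init_tape !last_bit_init eq_sym; apply: Hf.
Qed.

Lemma verifier_sound (G : graph) (id kappa : vertex G -> bits) :
  accepts verifier id kappa -> bipartite G.
Proof.
case=> [f0 [r Hacc]].
have [okK HsK] := verifier_exec_fuel id kappa r.
case E: (exec verifier id kappa (fun _ => f0) r) Hacc => [S o] [ok [Hst Hout]].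
have := @exec_fuel_irrelevant verifier _ id kappa (fun _ => f0) (fun _ => verifier_fuel id kappa) r.
rewrite E /= => /(_ ok okK) HS.
have u0 : vertex G by exists 0; exact: gsize_pos.
case: r E HS HsK okK => [|[|r]] E HS HsK okK.
- by have := Hst u0; rewrite HS HsK.
- by have := Hst u0; rewrite HS HsK.
exists (colour id kappa) => u v huv.
have := Hout u; rewrite HS HsK /= bits_of_output.
case Hok: (proper_at id kappa u) => // _.
by move/allP: Hok => /(_ v); rewrite nbrs_mem eq_sym => /(_ huv).
Qed.

Lemma bipartite_NLP : NLP bipartite.
Proof.
split; first exact: bipartite_property.
exists verifier, 1, 1, [:: 1]; do 3!split=> //; first exact: verifier_local_poly.
move=> G id _; split.
- case=> f Hf; exists (fun u => [:: f u]); split; last exact: verifier_complete.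
  by move=> u; rewrite /npoly /=; lia.
- by case=> kappa [_ /verifier_sound].
Qed.

Theorem proposition9p1 :
  (forall Delta : nat, 2 <= Delta ->
     strict_subclass (restrict LP (graph_Delta Delta))
                     (restrict NLP (graph_Delta Delta))) /\
  strict_subclass LP NLP.
Proof.
split; last first.
  split; first exact: LP_sub_NLP.
  exists bipartite; split; first exact: bipartite_NLP.
  by move=> H; apply: bipartite_not_LP_Delta2; exists bipartite.
move=> D hD; split.
  by move=> Q [P [HP HQ]]; exists P; split=> //; apply: LP_sub_NLP.
exists (fun G => bipartite G /\ graph_Delta D G); split.
  by exists bipartite; split=> //; apply: bipartite_NLP.
case=> P [HP HQ]; apply: bipartite_not_LP_Delta2; exists P; split=> // G HG.
have HGD := graph_Delta_mono hD HG.
by split=> H; [case: ((HQ G).2 (conj H HGD)) | case: ((HQ G).1 (conj H HGD))].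
Qed.
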